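(* The poset $(\mathcal{F}_{\mathrm{ord}}(n),\le)$ is isomorphic to the Tamari lattice $\mathrm{Tam}_n$.
   Context: An ordered forest is a finite forest of rooted trees in which the children of each vertex are linearly ordered and the trees are linearly ordered (left to right); $\mathcal{F}_{\mathrm{ord}}(n)$ is the set of ordered forests on $n$ vertices up to isomorphism. Operation on a vertex $v$: if $v$ is a leaf nothing changes; otherwise the rightmost child $v'$ of $v$ (with its subtree) is detached from $v$ and either attached to the parent $w$ of $v$ immediately to the right of $v$, or, if $v$ is a root, made a new tree immediately to the right of the tree of $v$. $F'\lessdot F$ means $F'$ is obtained from $F$ by operating on a non-leaf vertex, and $\le$ is the reflexive-transitive closure of $\lessdot$. $\mathrm{Tam}_n$ is (isomorphic to) the set $\mathrm{Av}_n(312)$ of permutations with no $i_1<i_2<i_3$ and $\sigma(i_1)>\sigma(i_3)>\sigma(i_2)$, ordered as a subposet of $S_n$ under the right weak order (generated by $\sigma\circ(i\ i{+}1)\lessdot\sigma$ whenever $\sigma(i)>\sigma(i+1)$). *)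

From Stdlib Require Import Relations.Relation_Operators.
From mathcomp Require Import all_boot all_fingroup.
Set Implicit Arguments. Unset Strict Implicit. Unset Printing Implicit Defensive.

(* Ordered (plane) trees and forests, up to isomorphism: an isomorphism class
   of ordered rooted trees is exactly a term [Node cs] where [cs] is the
   left-to-right list of the subtrees rooted at the children of the root. *)
Inductive tree : Type := Node of seq tree.
Definition forest := seq tree.

Fixpoint tree_size (t : tree) : nat :=
  let: Node cs := t in (sumn (map tree_size cs)).+1.
Definition forest_size (F : forest) : nat := sumn (map tree_size F).

(* [forest_step F F'] : F' is obtained from F by operating on a non-leaf vertex v.
   Either v is one of the roots of F (its rightmost child c becomes a new tree
   immediately to the right of v's tree), or v lies inside a tree [Node cs] of F,
   in which case the operation happens inside the forest [cs] of subtrees of that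
   root (when v is a child of this root, c is attached to the root immediately to
   the right of v, i.e. it becomes a new tree of the forest [cs] right of v). *)
Inductive forest_step : forest -> forest -> Prop :=
  | step_root (a b cs : forest) (c : tree) :
      forest_step (a ++ Node (rcons cs c) :: b) (a ++ Node cs :: c :: b)
  | step_inner (a b cs cs' : forest) :
      forest_step cs cs' ->
      forest_step (a ++ Node cs :: b) (a ++ Node cs' :: b).

Definition forest_le (F' F : forest) : Prop := @clos_refl_trans forest forest_step F F'.

Definition Ford (n : nat) := {F : forest | forest_size F = n}.

Definition avoids312 n (s : 'S_n) : Prop :=
  ~ exists i1 i2 i3 : 'I_n,
      [/\ i1 < i2, i2 < i3, s i1 > s i3 & s i3 > s i2].

Definition weak_cover n (sigma tau : 'S_n) : Prop :=
  exists i j : 'I_n, [/\ val j = (val i).+1, sigma i > sigma j &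
                        forall x, tau x = sigma (tperm i j x)].

Definition weak_le n (tau sigma : 'S_n) : Prop :=
  @clos_refl_trans 'S_n (@weak_cover n) sigma tau.

Definition Tam (n : nat) := {s : 'S_n | avoids312 s}.

From mathcomp Require Import all_boot all_fingroup zify.
From Stdlib Require Import Relations.Relation_Operators Classical_Prop ClassicalEpsilon.
From Stdlib Require Import ProofIrrelevance.
Set Implicit Arguments. Unset Strict Implicit. Unset Printing Implicit Defensive.

(* Number the vertices of an ordered forest [F] in preorder.  Its descendant
   relation [desc F] is transitive and interval-closed (if [a < b < c] and [c]
   lies below [a], so does [b]); it determines [F], and every such relation on
   [0, n) comes from a forest.  An operation only removes descendant pairs, and
   whenever a transitive interval-closed [R] is strictly contained in [desc F],
   some operation on [F] keeps [R] contained; so the order on forests is the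
   inclusion of descendant relations.  Dually, a permutation is determined by its
   inversion set, inversion sets are the transitive and co-transitive relations,
   avoiding 312 means the inversion set is interval-closed, and the right weak
   order is inclusion of inversion sets, as a cover removes one inversion and a
   proper inclusion always leaves an adjacent descent to undo.  Matching forests
   and permutations with the same relation is thus an order isomorphism. *)

(** * Forests and their descendant relation *)

Lemma forest_size_cons cs rest :
  forest_size (Node cs :: rest) = (forest_size cs).+1 + forest_size rest.
Proof. by []. Qed.

Lemma forest_size_cat A B : forest_size (A ++ B) = forest_size A + forest_size B.
Proof. by rewrite /forest_size map_cat sumn_cat. Qed.

Lemma tree_size_gt0 t : 0 < tree_size t.
Proof. by case: t. Qed.

Lemma forest_size_rcons cs c : forest_size (rcons cs c) = forest_size cs + tree_size c.
Proof. by rewrite -cats1 forest_size_cat /forest_size /= addn0. Qed.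

Lemma forest_nested_ind (P : forest -> Prop) :
  P [::] -> (forall cs rest, P cs -> P rest -> P (Node cs :: rest)) -> forall F, P F.
Proof.
move=> P0 Pcons F; have [m] := ubnP (forest_size F).
elim: m F => // m IH [|[cs] rest] //; rewrite forest_size_cons => ltm.
by apply: Pcons; apply: IH; lia.
Qed.

(* [desc F a b]: numbering the vertices of [F] from [0] in preorder, vertex [b]
   is a proper descendant of vertex [a]. *)
Fixpoint tree_desc (t : tree) (desc_rest : rel nat) : rel nat :=
  let: Node cs := t in
  fun a b =>
    let k := forest_size cs in
    if a == 0 then 0 < b <= k
    else if a <= k then foldr tree_desc (fun _ _ => false) cs a.-1 b.-1
    else desc_rest (a - k.+1) (b - k.+1).

Definition desc (F : forest) : rel nat := foldr tree_desc (fun _ _ => false) F.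

Lemma desc_cons cs rest a b : desc (Node cs :: rest) a b =
  if a == 0 then 0 < b <= forest_size cs
  else if a <= forest_size cs then desc cs a.-1 b.-1
  else desc rest (a - (forest_size cs).+1) (b - (forest_size cs).+1).
Proof. by []. Qed.

Lemma desc_lt F a b : desc F a b -> a < b < forest_size F.
Proof.
elim/forest_nested_ind: F a b => [//|cs rest IHcs IHrest] a b.
rewrite desc_cons forest_size_cons.
case: ifP => [/eqP-> | a0]; first lia.
by case: ifP => _ => [/IHcs | /IHrest]; lia.
Qed.

Lemma desc_trans F : transitive (desc F).
Proof.
elim/forest_nested_ind: F => [//|cs rest IHcs IHrest] b a c Dab Dbc.
move: (desc_lt Dab) (desc_lt Dbc) => ltab ltbc.
have b0 : (b == 0) = false by lia.
move: Dab Dbc; rewrite !desc_cons b0.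
case: ifP => [/eqP a0 /andP[_ bk] | a0].
  by rewrite ifT // => /desc_lt; lia.
case: ifP => ak Dab.
  by rewrite ifT => [/(IHcs _ _ _ Dab)|]; last by move: (desc_lt Dab); lia.
by rewrite ifF => [/(IHrest _ _ _ Dab)|]; last lia.
Qed.

Definition interval_closed (R : rel nat) :=
  forall a b c, a < b -> b < c -> R a c -> R a b.

Lemma desc_interval_closed F : interval_closed (desc F).
Proof.
elim/forest_nested_ind: F => [//|cs rest IHcs IHrest] a b c ab bc.
rewrite !desc_cons; case: ifP => [_|a0]; first lia.
case: ifP => ak; [apply: IHcs | apply: IHrest]; lia.
Qed.

Lemma desc_cat A B x y : desc (A ++ B) x y =
  if x < forest_size A then desc A x y
  else desc B (x - forest_size A) (y - forest_size A).
Proof.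
elim: A x y => [|[cs] A IH] x y; first by rewrite !subn0.
rewrite cat_cons !desc_cons IH forest_size_cons.
case: ifP => [/eqP->|x0]; first by [].
case: ifP => xk; first by rewrite ifT //; lia.
by rewrite !subnDA; case: ifP => xA; [rewrite ifT | rewrite ifF] => //; lia.
Qed.

Lemma desc_root_step cs c rest x y :
  desc (Node cs :: c :: rest) x y =
  desc (Node (rcons cs c) :: rest) x y && ~~ ((x == 0) && (forest_size cs < y)).
Proof.
rewrite -cats1 -[c :: rest]/([:: c] ++ rest) !desc_cons !desc_cat forest_size_cat.
set k := forest_size cs; set m := forest_size [:: c].
case: (posnP x) => [_ | x0]; first by apply/idP/idP; lia.
rewrite andFb andbT.
have -> : x.-1 - k = x - k.+1 by lia.
have -> : y.-1 - k = y - k.+1 by lia.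
have -> : x - (k + m).+1 = x - k.+1 - m by lia.
have -> : y - (k + m).+1 = y - k.+1 - m by lia.
case: (leqP x k) => xk; first by rewrite ifT ?ifT //; lia.
by case: (leqP x (k + m)) => xkm; [rewrite ifT ?ifF ?ifT | rewrite ifF ?ifF]; lia.
Qed.

Definition desc_proper F' F := [/\ forest_size F' = forest_size F,
  subrel (desc F') (desc F) & exists a b, desc F a b && ~~ desc F' a b].

Lemma desc_proper_cat A X' X : desc_proper X' X -> desc_proper (A ++ X') (A ++ X).
Proof.
case=> eqsz sub [a [b /andP[Xab X'ab]]]; split.
- by rewrite !forest_size_cat eqsz.
- by move=> x y; rewrite !desc_cat; case: ifP => // _ /sub.
- exists (a + forest_size A), (b + forest_size A).
  by rewrite !desc_cat ltnNge leq_addl /= !addnK Xab.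
Qed.

Lemma desc_proper_root cs c rest :
  desc_proper (Node cs :: c :: rest) (Node (rcons cs c) :: rest).
Proof.
split.
- by rewrite !forest_size_cons forest_size_rcons /forest_size /=; lia.
- by move=> x y; rewrite desc_root_step => /andP[].
- exists 0, (forest_size cs).+1; rewrite desc_root_step ltnSn andbF andbT.
  by rewrite desc_cons forest_size_rcons /=; have := tree_size_gt0 c; lia.
Qed.

Lemma desc_proper_inner cs' cs rest :
  desc_proper cs' cs -> desc_proper (Node cs' :: rest) (Node cs :: rest).
Proof.
case=> eqsz sub [a [b /andP[Dab D'ab]]]; split.
- by rewrite !forest_size_cons eqsz.
- by move=> x y; rewrite !desc_cons eqsz; case: ifP => // _; case: ifP => // _ /sub.
- exists a.+1, b.+1; move: (desc_lt Dab) => ltab.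
  by rewrite !desc_cons eqsz !ifT //= ?Dab; lia.
Qed.

Lemma step_desc_proper F F' : forest_step F F' -> desc_proper F' F.
Proof.
elim=> [A rest cs c | A rest cs cs' _ IH]; apply: desc_proper_cat.
  exact: desc_proper_root.
exact: desc_proper_inner.
Qed.

Lemma forest_step_cons t F F' : forest_step F F' -> forest_step (t :: F) (t :: F').
Proof.
by case=> [A ? ? ? | A ? ? ? ?]; [apply: (step_root (t :: A)) | apply: (step_inner (t :: A))].
Qed.

(* With [F = Node cs :: rest] and [k = forest_size cs], these restrict a relation
   on the vertices of [F] to those of [cs] (numbered from 1 in [F]) and to those
   of [rest] (numbered from [k + 1]), renumbered from 0. *)
Definition children_rel k (R : rel nat) : rel nat := fun x y => (x < k) && R x.+1 y.+1.
Definition rest_rel k (R : rel nat) : rel nat := fun x y => R (x + k.+1) (y + k.+1).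

Lemma children_rel_desc cs rest :
  children_rel (forest_size cs) (desc (Node cs :: rest)) =2 desc cs.
Proof.
move=> x y; rewrite /children_rel desc_cons /=.
by case: ltnP => // xk; apply/esym/negP => /desc_lt; lia.
Qed.

Lemma rest_rel_desc cs rest : rest_rel (forest_size cs) (desc (Node cs :: rest)) =2 desc rest.
Proof. by move=> x y; rewrite /rest_rel desc_cons !addnK !ifF //; lia. Qed.

Lemma children_rel_trans k R : transitive R -> transitive (children_rel k R).
Proof.
by move=> Rtr y x z /andP[xk Rxy] /andP[_ /(Rtr _ _ _ Rxy)]; rewrite /children_rel xk.
Qed.

Lemma rest_rel_trans k R : transitive R -> transitive (rest_rel k R).
Proof. by move=> Rtr y x z; apply: Rtr. Qed.

Lemma children_rel_interval_closed k R :
  interval_closed R -> interval_closed (children_rel k R).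
Proof. by move=> Rint a b c ab bc /andP[ak /Rint Rab]; rewrite /children_rel ak Rab. Qed.

Lemma rest_rel_interval_closed k R :
  interval_closed R -> interval_closed (rest_rel k R).
Proof. by move=> Rint a b c ab bc; apply: Rint; rewrite ltn_add2r. Qed.

Lemma subrel_desc_cons cs cs' rest rest' R :
  forest_size cs' = forest_size cs -> subrel R (desc (Node cs :: rest)) ->
  subrel (children_rel (forest_size cs) R) (desc cs') ->
  subrel (rest_rel (forest_size cs) R) (desc rest') ->
  subrel R (desc (Node cs' :: rest')).
Proof.
move=> eqsz RF Rcs Rrest x y Rxy; have := desc_lt (RF _ _ Rxy).
move: (RF _ _ Rxy); rewrite !desc_cons eqsz; case: ifP => // x0.
case: ifP => xk _ ltxy; [apply: Rcs | apply: Rrest].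
  by rewrite /children_rel !prednK ?Rxy ?andbT; lia.
by rewrite /rest_rel !subnK //; lia.
Qed.

Lemma desc_last_child cs c rest y :
  desc (Node (rcons cs c) :: rest) (forest_size cs).+1 y =
  ((forest_size cs).+1 < y <= forest_size cs + tree_size c).
Proof.
case: c => ccs; rewrite desc_cons forest_size_rcons -cats1 desc_cat ltnn subnn.
rewrite ifT; last by rewrite /tree_size; lia.
by rewrite desc_cons /=; apply/idP/idP; rewrite /forest_size; lia.
Qed.

Lemma children_rel_subrel cs rest R : subrel R (desc (Node cs :: rest)) ->
  subrel (children_rel (forest_size cs) R) (desc cs).
Proof.
by move=> RF x y /andP[xk /RF Fxy]; rewrite -(children_rel_desc cs rest) /children_rel xk.
Qed.

Lemma rest_rel_subrel cs rest R : subrel R (desc (Node cs :: rest)) ->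
  subrel (rest_rel (forest_size cs) R) (desc rest).
Proof. by move=> RF x y /RF Fxy; rewrite -(rest_rel_desc cs rest). Qed.

Lemma subrel_desc_root_step cs c rest R : interval_closed R ->
  subrel R (desc (Node (rcons cs c) :: rest)) -> ~~ R 0 (forest_size cs).+1 ->
  subrel R (desc (Node cs :: c :: rest)).
Proof.
move=> Rint RF R0 x y Rxy; rewrite desc_root_step RF //=.
apply/negP => /andP[/eqP x0 ky]; subst x.
case: (ltngtP y (forest_size cs).+1) => [|ky'|ey]; first lia.
  by move: R0; rewrite (Rint _ _ y).
by move: R0; rewrite -ey Rxy.
Qed.

Lemma missing_pair_below_root cs c rest R b : transitive R -> interval_closed R ->
  R 0 (forest_size cs).+1 -> desc (Node (rcons cs c) :: rest) 0 b -> ~~ R 0 b ->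
  exists a' b', [/\ 0 < a', desc (Node (rcons cs c) :: rest) a' b' & ~~ R a' b'].
Proof.
set r := (forest_size cs).+1 => Rtr Rint R0r F0b R0b.
have rb : r < b.
  move: F0b; rewrite desc_cons forest_size_rcons => /andP[b0 _].
  case: (ltngtP r b) => // [br | eb]; last by rewrite -eb R0r in R0b.
  by rewrite (Rint _ _ r) in R0b.
exists r, b; split=> //.
  by move: F0b; rewrite desc_last_child desc_cons forest_size_rcons /=; lia.
by apply: contraNN R0b; apply: Rtr.
Qed.

Lemma exists_step_above F R : transitive R -> interval_closed R ->
  subrel R (desc F) -> (exists a b, desc F a b && ~~ R a b) ->
  exists2 F', forest_step F F' & subrel R (desc F').
Proof.
(* A missing pair below the first root is handled inside [cs] or [rest].  If one
   at the first root is missing, either [R] leaves out the root of its last child,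
   which is then detached by a root operation, or a pair below that child is missing. *)
elim/forest_nested_ind: F R => [|cs rest IHcs IHrest] R Rtr Rint RF [a [b]] //.
move=> /andP[Fab Rab].
have step_below_root a' b' : 0 < a' -> desc (Node cs :: rest) a' b' -> ~~ R a' b' ->
    exists2 F', forest_step (Node cs :: rest) F' & subrel R (desc F').
  move=> a0 {}Fab {}Rab; have ltab := desc_lt Fab.
  case: (leqP a' (forest_size cs)) => ak.
  - have [cs' st Rcs'] : exists2 cs', forest_step cs cs' &
        subrel (children_rel (forest_size cs) R) (desc cs').
      apply: IHcs; [exact: children_rel_trans | exact: children_rel_interval_closed
                   | exact: children_rel_subrel RF | exists a'.-1, b'.-1].
      by rewrite -(children_rel_desc cs rest) /children_rel !prednK //; lia.
    have [eqsz _ _] := step_desc_proper st.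
    exists (Node cs' :: rest); first exact: (step_inner [::] rest st).
    exact: subrel_desc_cons eqsz RF Rcs' (rest_rel_subrel RF).
  - have [rest' st Rrest'] : exists2 rest', forest_step rest rest' &
        subrel (rest_rel (forest_size cs) R) (desc rest').
      apply: IHrest; [exact: rest_rel_trans | exact: rest_rel_interval_closed
                     | exact: rest_rel_subrel RF | ].
      exists (a' - (forest_size cs).+1), (b' - (forest_size cs).+1).
      by rewrite -(rest_rel_desc cs rest) /rest_rel !subnK //; lia.
    exists (Node cs :: rest'); first exact: forest_step_cons.
    exact: subrel_desc_cons RF (children_rel_subrel RF) Rrest'.
case: (posnP a) => [a0 | a0]; last exact: step_below_root Fab Rab.
subst a; have [Ecs | [cs0 [c Ecs]]] : cs = [::] \/ exists cs0 c, cs = rcons cs0 c.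
- by case/lastP: cs {IHcs RF Fab step_below_root} => [|cs0 c]; [left | right; exists cs0, c].
- by move: Fab; rewrite Ecs desc_cons /forest_size /=; lia.
subst cs; case: (boolP (R 0 (forest_size cs0).+1)) => R0r.
  have [a' [b' [a0 Fab' Rab']]] := missing_pair_below_root Rtr Rint R0r Fab Rab.
  exact: step_below_root Fab' Rab'.
exists (Node cs0 :: c :: rest); first exact: (step_root [::]).
exact: subrel_desc_root_step.
Qed.

Lemma desc_inj F G : forest_size F = forest_size G -> desc F =2 desc G -> F = G.
Proof.
elim/forest_nested_ind: F G => [|cs rest IHcs IHrest] [|[cs'] rest'] //.
move=> eqsz eqD; have eqk : forest_size cs = forest_size cs'.
  have := eqD 0 (forest_size cs); have := eqD 0 (forest_size cs').
  by rewrite !desc_cons /=; case: ltngtP => //; lia.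
congr (Node _ :: _).
  apply: IHcs => // x y.
  by rewrite -(children_rel_desc cs rest) -(children_rel_desc cs' rest') -eqk /children_rel eqD.
apply: IHrest => [|x y]; first by move: eqsz; rewrite !forest_size_cons eqk; lia.
by rewrite -(rest_rel_desc cs rest) -(rest_rel_desc cs' rest') -eqk /rest_rel eqD.
Qed.

Lemma subrel_desc_ord n F G : forest_size F = n ->
  (forall a b : 'I_n, desc F a b -> desc G a b) -> subrel (desc F) (desc G).
Proof.
move=> szF sub a b Fab; have /andP[ab bn] := desc_lt Fab; rewrite szF in bn.
exact: (sub (Ordinal (ltn_trans ab bn)) (Ordinal bn)).
Qed.

Definition desc_pairs n F : {set 'I_n * 'I_n} := [set p : 'I_n * 'I_n | desc F p.1 p.2].

Lemma desc_pairs_proper F' F :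
  desc_proper F' F -> desc_pairs (forest_size F) F' \proper desc_pairs (forest_size F) F.
Proof.
case=> _ sub [a [b /andP[Fab F'ab]]]; have /andP[ab bn] := desc_lt Fab.
apply/properP; split; first by apply/subsetP => p; rewrite !inE => /sub.
by exists (Ordinal (ltn_trans ab bn), Ordinal bn); rewrite !inE /= ?Fab.
Qed.

Lemma forest_leP G F :
  forest_size G = forest_size F -> forest_le G F <-> subrel (desc G) (desc F).
Proof.
move=> eqsz; split.
  elim=> [F1 F2 /step_desc_proper[] // | F1 x y //
          | F1 F2 F3 _ sub12 _ sub23 x y /sub23 /sub12 //].
have [m] := ubnP #|desc_pairs (forest_size F) F|.
elim: m F eqsz => // m IH F eqsz ltm GF.
have [missing | none] := classic (exists a b, desc F a b && ~~ desc G a b).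
  have [F' st GF'] := exists_step_above (@desc_trans G) (@desc_interval_closed G) GF missing.
  have Fp := step_desc_proper st; case: (Fp) => eqsz' _ _.
  apply: (rt_trans _ _ _ F'); first exact: rt_step.
  apply: IH; rewrite ?eqsz' //.
  by have := proper_card (desc_pairs_proper Fp); lia.
suff -> : F = G by exact: rt_refl.
apply: desc_inj => // a b; apply/idP/idP => [Fab | /GF //].
by apply/negPn/negP => nGab; apply: none; exists a, b; rewrite Fab nGab.
Qed.

Lemma interval_closed_root n (R : rel nat) : 0 < n ->
  (forall a b, R a b -> a < b < n) -> interval_closed R ->
  exists2 k, k < n & forall b, R 0 b = (0 < b <= k).
Proof.
move=> n0 Rsupp Rint.
case: (boolP [exists b : 'I_n, R 0 b]) => [/existsP[b1 R0b1] | none].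
  have ub b : R 0 b -> b <= n by move/Rsupp; lia.
  have [k R0k kmax] := ex_maxnP (ex_intro (R 0) _ R0b1) ub.
  exists k => [|b]; first by have := Rsupp _ _ R0k; lia.
  apply/idP/idP => [R0b | /andP[b0 bk]].
    by have := Rsupp _ _ R0b; have := kmax _ R0b; lia.
  case: (ltngtP b k) => [bk' | kb | -> //]; first exact: Rint R0k.
  by rewrite ltnNge bk in kb.
exists 0 => // b; apply/idP/idP => [R0b | ]; last lia.
have /andP[_ bn] := Rsupp _ _ R0b.
by move/existsP: none; case; exists (Ordinal bn).
Qed.

Lemma desc_surj n (R : rel nat) : (forall a b, R a b -> a < b < n) ->
  transitive R -> interval_closed R -> exists2 F, forest_size F = n & desc F =2 R.
Proof.
have [N] := ubnP n; elim: N n R => // N IH n R ltnN Rsupp Rtr Rint.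
case: (posnP n) => [n0 | n0].
  by exists [::] => // a b; apply/esym/negP => /Rsupp; lia.
have R_ge x y : y <= x -> R x y = false by move=> yx; apply/negP => /Rsupp; lia.
have [k kn R0] := interval_closed_root n0 Rsupp Rint.
have [cs szcs Dcs] : exists2 cs, forest_size cs = k & desc cs =2 children_rel k R.
  apply: IH; [lia | | exact: children_rel_trans | exact: children_rel_interval_closed].
  move=> x y /andP[xk Rxy]; have R0x : R 0 x.+1 by rewrite R0.
  by move: (Rsupp _ _ Rxy) (R0 y.+1); rewrite (Rtr _ _ _ R0x Rxy); lia.
have [rest szrest Drest] :
    exists2 rest, forest_size rest = n - k.+1 & desc rest =2 rest_rel k R.
  apply: IH; [lia | | exact: rest_rel_trans | exact: rest_rel_interval_closed].
  by move=> x y /Rsupp; lia.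
exists (Node cs :: rest); first by rewrite forest_size_cons szcs szrest; lia.
move=> a b; rewrite desc_cons szcs; case: ifP => [/eqP -> | a0]; first by rewrite R0.
case: ifP => ak; [rewrite Dcs /children_rel | rewrite Drest /rest_rel].
  case: (posnP b) => [-> | b0]; last by rewrite !prednK //; lia.
  by rewrite prednK ?R_ge ?andbF //; lia.
case: (ltnP k b) => kb; first by rewrite !subnK //; lia.
by rewrite (_ : b - k.+1 = 0) ?add0n ?R_ge //; lia.
Qed.

(** * Permutations and their inversions *)

Lemma card_ord_lt n m : m <= n -> #|[set y : 'I_n | y < m]| = m.
Proof.
move=> mn; have widen_inj : injective (widen_ord mn) by move=> x y [] /val_inj.
rewrite -[RHS]card_ord -cardsT -(card_imset _ widen_inj).
apply: eq_card => y; rewrite inE; apply/idP/imsetP => [ym | [z _ ->]]; last exact: ltn_ord z.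
by exists (Ordinal ym); last apply: val_inj.
Qed.

Lemma perm_rank n (p : 'S_n) x : #|[set y | p y < p x]| = p x.
Proof.
have -> : [set y | p y < p x] = p @^-1: [set z : 'I_n | z < p x].
  by apply/setP => y; rewrite !inE.
by rewrite card_preimset ?card_ord_lt 1?ltnW //; apply: perm_inj.
Qed.

Lemma perm_homo_id n (p : 'S_n) : {homo p : x y / x < y} -> p = 1%g.
Proof.
move=> p_homo; apply/permP => x; apply: ord_inj.
rewrite perm1 -perm_rank -[RHS](card_ord_lt (ltnW (ltn_ord x))).
apply: eq_card => y; rewrite !inE.
by case: (ltngtP y x) => [/p_homo -> // | /p_homo/ltnW/leq_gtF | /val_inj ->]; rewrite ?ltnn.
Qed.

(* Inversions of [s] are recorded by value: the pairs of values [a < b] that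
   occur in decreasing order in the word [s 0, s 1, ..., s (n-1)]. *)
Definition inversion n (s : 'S_n) : rel 'I_n :=
  fun a b => (a < b) && ((s^-1)%g b < (s^-1)%g a).

Lemma inversion_perm n (s : 'S_n) x y : inversion s (s x) (s y) = (s x < s y) && (y < x).
Proof. by rewrite /inversion !permK. Qed.

Lemma inversion_trans n (s : 'S_n) : transitive (inversion s).
Proof. by move=> b a c /andP[ab ba] /andP[bc cb]; apply/andP; split; lia. Qed.

Lemma permV_ltE n (s : 'S_n) x y :
  ((s^-1)%g y < (s^-1)%g x) = if y < x then ~~ inversion s y x else inversion s x y.
Proof.
rewrite /inversion; case: (ltngtP y x) => //= [yx | /val_inj ->]; last by rewrite ltnn.
have : ((s^-1)%g y : nat) != (s^-1)%g x.
  by rewrite val_eqE (inj_eq perm_inj); apply: contraTneq yx => ->; rewrite ltnn.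
by move=> ne; apply/idP/idP; lia.
Qed.

Lemma inversion_inj n (s t : 'S_n) : inversion s =2 inversion t -> s = t.
Proof.
move=> eq_st; apply: invg_inj; apply/permP => x; apply: ord_inj.
rewrite -perm_rank -[RHS]perm_rank; apply: eq_card => y.
by rewrite !inE !permV_ltE !eq_st.
Qed.

Lemma exists_perm_order n (lt : rel 'I_n) : irreflexive lt -> transitive lt ->
  (forall x y, x != y -> lt x y || lt y x) ->
  exists p : 'S_n, forall x y, (p x < p y) = lt x y.
Proof.
move=> irr tr tot; pose rank x := #|[set y | lt y x]|.
have rank_lt x y : lt x y -> rank x < rank y.
  move=> xy; apply: proper_card; apply/properP; split.
    by apply/subsetP => z; rewrite !inE => /tr; apply.
  by exists x; rewrite !inE ?xy ?irr.
have rank_bound x : rank x < n.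
  rewrite -[n]card_ord -cardsT; apply: proper_card; apply/properP; split; first exact: subsetT.
  by exists x; rewrite !inE ?irr.
have rank_inj : injective (fun x => Ordinal (rank_bound x)).
  move=> x y /(congr1 val) /= exy; apply/eqP/negPn/negP => /tot /orP[] /rank_lt; lia.
exists (perm rank_inj) => x y; rewrite !permE /=.
case: (boolP (lt x y)) => [/rank_lt // | nxy].
case: (eqVneq x y) => [-> | /tot]; first by rewrite ltnn.
by rewrite (negbTE nxy) /= => /rank_lt; lia.
Qed.

Lemma exists_perm_inversion n (R : rel 'I_n) :
  (forall a b c : 'I_n, a < b < c -> R a b -> R b c -> R a c) ->
  (forall a b c : 'I_n, a < b < c -> R a c -> R a b || R b c) ->
  exists s : 'S_n, forall a b, inversion s a b = (a < b) && R a b.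
Proof.
move=> Rtr Rcotr.
pose before (x y : 'I_n) := if x < y then ~~ R x y else (y < x) && R y x.
have before_irr : irreflexive before by move=> x; rewrite /before ltnn.
have before_total x y : x != y -> before x y || before y x.
  by rewrite -val_eqE /before; case: ltngtP => //=; case: (R _ _).
have before_trans : transitive before.
  move=> y x z; rewrite /before; case: (eqVneq x z) => [<- | /negbTE xz].
    by case: (ltngtP x y) => //=; lia.
  rewrite -val_eqE /= in xz.
  (* each strict ordering of [x], [y], [z] is settled by one of these instances *)
  have := Rtr x z y; have := Rtr y x z; have := Rtr z y x.
  have := Rcotr x y z; have := Rcotr z x y; have := Rcotr y z x.
  by case: (ltngtP x y) => xy; case: (ltngtP y z) => yz; case: (ltngtP x z) => xz' /=; lia.
have [p before_p] := exists_perm_order before_irr before_trans before_total.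
exists (p^-1)%g => a b; rewrite /inversion invgK before_p /before.
by case: ltngtP => //=; case: ltngtP.
Qed.

Lemma inversion_tperm n (s : 'S_n) (i j : 'I_n) : j = i.+1 :> nat -> s j < s i ->
  inversion (tperm i j * s) =2 (fun a b => inversion s a b && ((a, b) != (s j, s i))).
Proof.
move=> ji sji a b.
have [u ->] : exists u, a = s u by exists ((s^-1)%g a); rewrite permKV.
have [v ->] : exists v, b = s v by exists ((s^-1)%g b); rewrite permKV.
rewrite inversion_perm /inversion invgM tpermV !permM !permK xpair_eqE !(inj_eq perm_inj).
have neq_val (x y : 'I_n) : x <> y -> x <> y :> nat by move=> xy /ord_inj.
by case: (tpermP i j u) => [-> | -> | /neq_val ui /neq_val uj];
  case: (tpermP i j v) => [-> | -> | /neq_val vi /neq_val vj]; rewrite -!val_eqE /=; lia.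
Qed.

Lemma ord_homo_ltn n (f : 'I_n -> nat) :
  (forall i j : 'I_n, j = i.+1 :> nat -> f i < f j) -> {homo f : i j / i < j}.
Proof.
move=> f_adj i j ij; pose g k := if insub k is Some x then f x else 0.
have gE (x : 'I_n) : g x = f x by rewrite /g valK.
rewrite -!gE; apply: (@homo_ltn_in _ [pred k | k < n] g (fun a b => a < b)); rewrite ?inE //.
- by move=> y x z; apply: ltn_trans.
- by move=> a b an bn c; rewrite !inE in an bn *; lia.
- move=> k kn kn'; rewrite !inE in kn kn'.
  by rewrite -[k]/(Ordinal kn : nat) -[k.+1]/(Ordinal kn' : nat) !gE; apply: f_adj.
Qed.

Lemma weak_coverP n (s s' : 'S_n) : weak_cover s s' <->
  exists i j : 'I_n, [/\ j = i.+1 :> nat, s j < s i & s' = (tperm i j * s)%g].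
Proof.
split=> -[i [j [ji sji e]]]; exists i, j; split=> //.
  by apply/permP => x; rewrite permM e.
by move=> x; rewrite e permM.
Qed.

Lemma weak_le_subrel n (t s : 'S_n) : weak_le t s -> subrel (inversion t) (inversion s).
Proof.
elim=> [s1 s2 /weak_coverP[i [j [ji sji ->]]] a b | s1 a b //
        | s1 s2 s3 _ sub12 _ sub23 a b /sub23 /sub12 //].
by rewrite inversion_tperm // => /andP[].
Qed.

Lemma exists_descent_notin n (s t : 'S_n) : subrel (inversion t) (inversion s) -> s != t ->
  exists i j : 'I_n, [/\ j = i.+1 :> nat, s j < s i & ~~ inversion t (s j) (s i)].
Proof.
move=> ts neq.
case: (boolP [exists i : 'I_n, exists j : 'I_n,
               [&& j == i.+1 :> nat, s j < s i & ~~ inversion t (s j) (s i)]]).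
  by case/existsP=> i /existsP[j /and3P[/eqP ji sji nt]]; exists i, j.
rewrite negb_exists => /forallP none.
(* otherwise [t^-1 \o s] increases at every adjacent pair of positions *)
suff : (s * t^-1 = 1)%g by move/eqP; rewrite -eq_mulgV1 (negbTE neq).
apply: perm_homo_id; apply: ord_homo_ltn => i j ji.
have ne : ((t^-1)%g (s i) : nat) != (t^-1)%g (s j).
  by rewrite val_eqE !(inj_eq perm_inj); apply/eqP => eij; move: ji; rewrite eij; lia.
rewrite !permM; case: (ltngtP (s i) (s j)) => [sij | sji | /ord_inj/perm_inj eij].
- have : ~~ inversion t (s i) (s j).
    by apply: contraNN (@ts _ _) _; rewrite inversion_perm; lia.
  by rewrite /inversion sij /=; lia.
- move: (none i); rewrite negb_exists => /forallP/(_ j).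
  by rewrite ji eqxx sji /= negbK /inversion => /andP[].
- by rewrite eij in ji; lia.
Qed.

Lemma weak_leP n (t s : 'S_n) : weak_le t s <-> subrel (inversion t) (inversion s).
Proof.
split; first exact: weak_le_subrel.
have [m] := ubnP #|[set p : 'I_n * 'I_n | inversion s p.1 p.2]|.
elim: m s => // m IH s ltm ts.
case: (eqVneq s t) => [-> | neq]; first exact: rt_refl.
have [i [j [ji sji nt]]] := exists_descent_notin ts neq.
have inv' := inversion_tperm ji sji.
apply: (rt_trans _ _ _ (tperm i j * s)%g).
  by apply: rt_step; apply/weak_coverP; exists i, j.
apply: IH.
  suff /proper_card : [set p : 'I_n * 'I_n | inversion (tperm i j * s) p.1 p.2]
      \proper [set p : 'I_n * 'I_n | inversion s p.1 p.2] by lia.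
  apply/properP; split.
    by apply/subsetP => -[a b]; rewrite !inE /= inv' => /andP[].
  by exists (s j, s i); rewrite !inE /= ?inv' ?eqxx ?andbF // inversion_perm sji; lia.
by move=> a b tab; rewrite inv' (ts _ _ tab); apply: contraNneq nt => -[<- <-].
Qed.

Lemma avoids312P n (s : 'S_n) : avoids312 s <->
  (forall a b c : 'I_n, a < b -> b < c -> inversion s a c -> inversion s a b).
Proof.
split=> [av a b c ab bc ac | IC [i1 [i2 [i3 [i12 i23 s31 s32]]]]].
  apply/negPn/negP => nab; apply: av.
  exists ((s^-1)%g c), ((s^-1)%g a), ((s^-1)%g b); rewrite !permKV.
  have : ((s^-1)%g a : nat) != (s^-1)%g b.
    by rewrite val_eqE (inj_eq perm_inj); apply: contraTneq ab => ->; rewrite ltnn.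
  by move: ac nab; rewrite /inversion => ac nab ne; split; lia.
have := IC _ _ _ s32 s31; rewrite !inversion_perm; lia.
Qed.

(** * The isomorphism *)

Definition ord_rel n (R : rel 'I_n) : rel nat := fun a b =>
  if (insub a, insub b) is (Some x, Some y) then R x y else false.

Lemma ord_relE n (R : rel 'I_n) (x y : 'I_n) : ord_rel R x y = R x y.
Proof. by rewrite /ord_rel !valK. Qed.

Lemma ord_relP n (R : rel 'I_n) a b :
  ord_rel R a b -> exists x y : 'I_n, [/\ a = x, b = y & R x y].
Proof.
by rewrite /ord_rel; case: insubP => // x _ <-; case: insubP => // y _ <-; exists x, y.
Qed.

Lemma forest_of_ord_rel n (R : rel 'I_n) :
  (forall a b, R a b -> a < b) -> transitive R ->
  (forall a b c : 'I_n, a < b -> b < c -> R a c -> R a b) ->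
  exists2 F, forest_size F = n & forall a b : 'I_n, desc F a b = R a b.
Proof.
move=> Rlt Rtr Rint.
have [F szF descF] : exists2 F, forest_size F = n & desc F =2 ord_rel R.
  apply: desc_surj.
  - by move=> a b /ord_relP[x [y [-> -> /Rlt xy]]]; rewrite xy ltn_ord.
  - move=> b a c /ord_relP[x [y [-> -> Rxy]]] /ord_relP[y' [z [/ord_inj <- -> Ryz]]].
    by rewrite ord_relE (Rtr _ _ _ Rxy Ryz).
  - move=> a b c ab bc /ord_relP[x [z [ea ec Rxz]]]; subst a c.
    have bn : b < n := ltn_trans bc (ltn_ord z).
    by rewrite -[b]/(Ordinal bn : nat) ord_relE (Rint x (Ordinal bn) z ab bc).
by exists F => // a b; rewrite descF ord_relE.
Qed.

Definition perm_of_forest n (F : forest) : 'S_n :=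
  odflt 1%g [pick s : 'S_n | [forall a, forall b, inversion s a b == desc F a b]].

Lemma inversion_perm_of_forest n F (a b : 'I_n) :
  inversion (perm_of_forest n F) a b = desc F a b.
Proof.
rewrite /perm_of_forest; case: pickP => [s /forallP/(_ a)/forallP/(_ b)/eqP // | none].
have [s inv_s] : exists s : 'S_n, forall a b, inversion s a b = (a < b) && desc F a b.
  apply: exists_perm_inversion => [x y z _ | x y z /andP[xy yz] Fxz]; first exact: desc_trans.
  by rewrite (desc_interval_closed xy yz Fxz).
suff : [forall a, forall b, inversion s a b == desc F a b] by rewrite none.
apply/forallP => x; apply/forallP => y; rewrite inv_s.
by case: (boolP (desc F x y)) => [/desc_lt/andP[-> _] | _]; rewrite ?andbF.
Qed.

Lemma perm_of_forest_avoids312 n F : avoids312 (perm_of_forest n F).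
Proof.
apply/avoids312P => a b c ab bc; rewrite !inversion_perm_of_forest.
exact: desc_interval_closed.
Qed.

Lemma inj_surj_bijective (A B : Type) (f : A -> B) :
  injective f -> (forall b, exists a, f a = b) -> bijective f.
Proof.
move=> f_inj f_surj.
pose g b := proj1_sig (constructive_indefinite_description _ (f_surj b)).
have fK b : f (g b) = b := proj2_sig (constructive_indefinite_description _ (f_surj b)).
by exists g => [a | b]; [apply: f_inj; rewrite fK | exact: fK].
Qed.

Lemma sval_inj (T : Type) (P : T -> Prop) : injective (@sval T P).
Proof. exact: eq_sig_hprop (fun x => @proof_irrelevance (P x)). Qed.

Theorem theorem4p7 (n : nat) :
  exists f : Ford n -> Tam n,
    bijective f /\
    forall F1 F2 : Ford n,
      forest_le (sval F1) (sval F2) <-> weak_le (sval (f F1)) (sval (f F2)).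
Proof.
pose f (F : Ford n) : Tam n := exist _ _ (@perm_of_forest_avoids312 n (sval F)).
have f_mono F1 F2 :
    subrel (desc (sval F1)) (desc (sval F2)) <-> weak_le (sval (f F1)) (sval (f F2)).
  rewrite weak_leP; split=> sub a b; first by rewrite !inversion_perm_of_forest; apply: sub.
  apply: (subrel_desc_ord (svalP F1)) => {}a {}b.
  by rewrite -!inversion_perm_of_forest; apply: sub.
exists f; split; last by move=> F1 F2; rewrite forest_leP ?f_mono // (svalP F1) (svalP F2).
apply: inj_surj_bijective.
  move=> F1 F2 eqf; apply: sval_inj; apply: desc_inj; first by rewrite (svalP F1) (svalP F2).
  by move=> a b; apply/idP/idP; move: a b; apply/f_mono; rewrite eqf; apply: rt_refl.
move=> [s avs].
have [F szF descF] :
    exists2 F, forest_size F = n & forall a b : 'I_n, desc F a b = inversion s a b.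
  apply: forest_of_ord_rel; [by move=> a b /andP[] | exact: inversion_trans | exact/avoids312P].
exists (exist _ F szF); apply: sval_inj; apply: inversion_inj => a b /=.
by rewrite inversion_perm_of_forest descF.
Qed.
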